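(* Let $\Omega\subset\mathbb{R}^N$ be a bounded domain with $C^{2,\alpha}$ boundary, $\alpha\in(0,1)$, let $a,c\in C^{0,\alpha}(\overline\Omega)$ with $a>0$ and $c>0$ on $\overline\Omega$, and let $\varepsilon\in(0,1)$. Then the problem $$-\Delta u+c(x)\,(u+\varepsilon)^{-1}|\nabla u|^2=a(x)\ \text{ in }\Omega,\qquad u>0\ \text{ in }\Omega,\qquad u=0\ \text{ on }\partial\Omega$$ has at most one solution $u\in C^{2,\alpha}(\overline\Omega)$. *)

From mathcomp Require Import all_boot.
From Stdlib Require Import Reals.
Set Implicit Arguments. Unset Strict Implicit. Unset Printing Implicit Defensive.
Open Scope R_scope.

Definition pt (N : nat) := 'I_N -> R.

Definition rdist (N : nat) (x y : pt N) : R :=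
  sqrt (\big[Rplus/0]_(i < N) ((x i - y i) * (x i - y i))).
Definition rball (N : nat) (p : pt N) (r : R) (x : pt N) : Prop := rdist p x < r.

Definition is_open (N : nat) (S : pt N -> Prop) : Prop :=
  forall x, S x -> exists r, 0 < r /\ forall y, rball x r y -> S y.

Definition is_connected (N : nat) (S : pt N -> Prop) : Prop :=
  forall U V : pt N -> Prop, is_open U -> is_open V ->
    (forall x, S x -> U x \/ V x) ->
    (forall x, ~ (S x /\ U x /\ V x)) ->
    (forall x, S x -> U x) \/ (forall x, S x -> V x).

Definition is_bounded (N : nat) (S : pt N -> Prop) : Prop :=
  exists M, forall x, S x -> rdist (fun _ => 0) x <= M.

Definition is_domain (N : nat) (S : pt N -> Prop) : Prop :=
  is_open S /\ (exists x, S x) /\ is_connected S.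

Definition rclosure (N : nat) (S : pt N -> Prop) (x : pt N) : Prop :=
  forall r, 0 < r -> exists y, S y /\ rball x r y.
Definition rboundary (N : nat) (S : pt N -> Prop) (x : pt N) : Prop :=
  rclosure S x /\ ~ S x.

Definition shift (N : nat) (x : pt N) (i : 'I_N) (t : R) : pt N :=
  fun j => if j == i then x j + t else x j.

Definition partial_at (N : nat) (f : pt N -> R) (i : 'I_N) (x : pt N) (l : R) : Prop :=
  derivable_pt_lim (fun t => f (shift x i t)) 0 l.

Definition holder_on (N : nat) (S : pt N -> Prop) (alpha : R) (f : pt N -> R) : Prop :=
  exists C, forall x y, S x -> S y -> Rabs (f x - f y) <= C * Rpower (rdist x y) alpha.

(* f in C^{2,alpha} on the open set S: first and second partial derivatives exist
   in S and f, Df, D^2 f are uniformly alpha-Hoelder on S (hence extend to the rclosure). *)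
Definition C2alpha_with (N : nat) (S : pt N -> Prop) (alpha : R) (f : pt N -> R)
  (Df : 'I_N -> pt N -> R) (D2f : 'I_N -> 'I_N -> pt N -> R) : Prop :=
  (forall i x, S x -> partial_at f i x (Df i x)) /\
  (forall i j x, S x -> partial_at (Df j) i x (D2f i j x)) /\
  holder_on S alpha f /\
  (forall i, holder_on S alpha (Df i)) /\
  (forall i j, holder_on S alpha (D2f i j)).

Definition C2alpha_on (N : nat) (S : pt N -> Prop) (alpha : R) (f : pt N -> R) : Prop :=
  exists Df D2f, C2alpha_with S alpha f Df D2f.

(* C^{2,alpha} rboundary (Gilbarg-Trudinger): near each rboundary point, Omega is the
   region on one side of the graph of a C^{2,alpha} function of N-1 of the coordinates. *)
Definition C2alpha_boundary (N : nat) (Om : pt N -> Prop) (alpha : R) : Prop :=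
  forall p, rboundary Om p ->
    exists (r : R) (k : 'I_N) (s : R) (g : pt N -> R),
      0 < r /\ (s = 1 \/ s = -1) /\
      (forall x y : pt N, (forall j, j != k -> x j = y j) -> g x = g y) /\
      C2alpha_on (rball p r) alpha g /\
      (forall x, rball p r x -> (Om x <-> s * (x k - g x) > 0)).

Definition laplacian_sum (N : nat) (D2u : 'I_N -> 'I_N -> pt N -> R) (x : pt N) : R :=
  \big[Rplus/0]_(i < N) D2u i i x.
Definition grad_sq (N : nat) (Du : 'I_N -> pt N -> R) (x : pt N) : R :=
  \big[Rplus/0]_(i < N) (Du i x * Du i x).

Definition is_solution (N : nat) (Om : pt N -> Prop) (alpha eps : R)
  (a c u : pt N -> R) : Prop :=
  holder_on (rclosure Om) alpha u /\
  exists Du D2u, C2alpha_with Om alpha u Du D2u /\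
    (forall x, Om x ->
       - laplacian_sum D2u x + c x * / (u x + eps) * grad_sq Du x = a x) /\
    (forall x, Om x -> 0 < u x) /\
    (forall x, rboundary Om x -> u x = 0).

From Pilot Require Import Defs.
From Stdlib Require Import Reals Lra Psatz FunctionalExtensionality.
From mathcomp Require Import all_boot all_order all_algebra.
From mathcomp Require Import boolp classical_sets topology normedtype.
From mathcomp Require Import matrix_normedtype derive Rstruct Rstruct_topology.
Import Order.TTheory GRing.Theory Num.Theory numFieldNormedType.Exports.
Set Implicit Arguments. Unset Strict Implicit. Unset Printing Implicit Defensive.
Open Scope R_scope.

(* For two solutions u1, u2 put U_k = u_k + eps > 0 on the closure
   and compare them through w = ln U1 - ln U2.  Being continuous on the compact
   closure, w attains its maximum at some x0.  If w(x0) > 0 then x0 is interior,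
   since w = 0 on the boundary.  On each coordinate line through x0 the function
   t |-> w(x0 + t e_i) is maximal at t = 0, so its first derivative vanishes and
   its second derivative is <= 0; this gives |grad u1|^2 / U1^2 = |grad u2|^2 / U2^2
   and Lap u1 / U1 <= Lap u2 / U2 at x0.  Dividing the equation by U_k gives
   Lap u_k / U_k = c |grad u_k|^2 / U_k^2 - a / U_k, hence a/U2 <= a/U1, i.e.
   U1 <= U2 at x0, contradicting w(x0) > 0.  Thus w <= 0, i.e. u1 <= u2, and by
   symmetry u1 = u2. *)

(* Finite sums of reals, written \big[Rplus/0] as in the definitions; they are
   the MathComp sums \sum over the real field R, which gives their theory. *)
Section FiniteSums.
Variable N : nat.

Lemma sum_sq_ge0 (v : 'I_N -> R) : 0 <= \big[Rplus/0]_(j < N) (v j * v j).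
Proof.
apply/RleP; change (0 <= \sum_(j < N) v j * v j)%R; apply: sumr_ge0 => j _.
by rewrite -expr2 sqr_ge0.
Qed.

Lemma sum_sq_ge_term (v : 'I_N -> R) (i : 'I_N) :
  v i * v i <= \big[Rplus/0]_(j < N) (v j * v j).
Proof.
apply/RleP; change (v i * v i <= \sum_(j < N) v j * v j)%R.
rewrite (bigD1 i) //= lerDl; apply: sumr_ge0 => j _.
by rewrite -expr2 sqr_ge0.
Qed.

Lemma sum_le (f g : 'I_N -> R) :
  (forall j, f j <= g j) ->
  \big[Rplus/0]_(j < N) f j <= \big[Rplus/0]_(j < N) g j.
Proof.
move=> fg; apply/RleP; change (\sum_(j < N) f j <= \sum_(j < N) g j)%R.
by apply: ler_sum => j _; apply/RleP.
Qed.

Lemma sum_le_const (f : 'I_N -> R) (d : R) :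
  (forall j, f j <= d) -> \big[Rplus/0]_(j < N) f j <= INR N * d.
Proof.
move=> fd; have -> : INR N * d = \big[Rplus/0]_(j < N) d.
  change (INR N * d = \sum_(j < N) d)%R.
  by rewrite sumr_const card_ord INRE mulr_natl.
exact: sum_le.
Qed.

Lemma sum_mulr (f : 'I_N -> R) (k : R) :
  \big[Rplus/0]_(j < N) (f j * k) = \big[Rplus/0]_(j < N) f j * k.
Proof. by change (\sum_(j < N) f j * k = (\sum_(j < N) f j) * k)%R; rewrite mulr_suml. Qed.

Lemma sum_single (f : 'I_N -> R) (i : 'I_N) :
  (forall j, j != i -> f j = 0) -> \big[Rplus/0]_(j < N) f j = f i.
Proof.
move=> f0; change (\sum_(j < N) f j = f i)%R.
by rewrite (bigD1 i) //= big1 ?addr0 // => j /f0.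
Qed.

End FiniteSums.

(* The Euclidean distance controls each coordinate, and conversely small
   coordinates give a small distance; this lets us pass between the Euclidean
   balls of the definitions and the sup-norm balls of the matrix library. *)
Lemma rdist_coord N (x y : pt N) (i : 'I_N) : Rabs (x i - y i) <= rdist x y.
Proof.
rewrite /rdist -sqrt_Rsqr_abs; apply: sqrt_le_1_alt.
exact: (sum_sq_ge_term (fun j => x j - y j)).
Qed.

Lemma rdist_small N (x y : pt N) (r : R) : 0 < r ->
  (forall i, Rabs (x i - y i) < r / (INR N + 1)) -> rdist x y < r.
Proof.
move=> r0 close; have hN := pos_INR N.
set d := r / (INR N + 1) in close *.
have d0 : 0 < d by apply: Rdiv_lt_0_compat; lra.
have rd : r = d * (INR N + 1) by rewrite /d; field; lra.
have sq_le : forall k, (x k - y k) * (x k - y k) <= d * d.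
  by move=> k; have [lo hi] := Rabs_def2 _ _ (close k); nra.
have hsum := sum_le_const sq_le.
rewrite /rdist -(sqrt_Rsqr r); last lra.
apply: sqrt_lt_1_alt; split; first exact: (sum_sq_ge0 (fun j => x j - y j)).
rewrite /Rsqr rd; nra.
Qed.

Lemma rdist_refl N (x : pt N) : rdist x x = 0.
Proof.
rewrite /rdist (_ : \big[Rplus/0]_(i < N) _ = 0) ?sqrt_0 //.
change (\sum_(i < N) (x i - x i) * (x i - x i) = 0)%R.
by apply: big1 => i _; rewrite subrr mul0r.
Qed.

Lemma rdist_eq0 N (x y : pt N) : rdist x y = 0 -> x = y.
Proof.
move=> d0; apply: functional_extensionality => j.
have := rdist_coord x y j; rewrite d0 => hj.
have := Rabs_pos (x j - y j).
by case: (Req_dec (x j - y j) 0) => [|/Rabs_pos_lt]; lra.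
Qed.

Lemma rdist_shift N (x : pt N) (i : 'I_N) (t : R) : rdist x (Defs.shift x i t) = Rabs t.
Proof.
rewrite /rdist (@sum_single N _ i).
  rewrite /Defs.shift eqxx -sqrt_Rsqr_abs /Rsqr; congr sqrt; ring.
by move=> j /negbTE ji; rewrite /Defs.shift ji; ring.
Qed.

Lemma shift_shift N (x : pt N) (i : 'I_N) (t s : R) :
  Defs.shift (Defs.shift x i t) i s = Defs.shift x i (t + s).
Proof. by apply: functional_extensionality => j; rewrite /Defs.shift; case: (j == i); ring. Qed.

Lemma shift0 N (x : pt N) (i : 'I_N) : Defs.shift x i 0 = x.
Proof. by apply: functional_extensionality => j; rewrite /Defs.shift; case: (j == i); ring. Qed.

Lemma subset_rclosure N (S : pt N -> Prop) (x : pt N) : S x -> rclosure S x.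
Proof. by move=> Sx r r0; exists x; split; rewrite // /rball rdist_refl. Qed.

Lemma rclosure_closed N (S : pt N -> Prop) (x : pt N) :
  rclosure (rclosure S) x -> rclosure S x.
Proof.
move=> clx r r0; have hN := pos_INR N.
have d0 : 0 < r / (INR N + 1) / 2 by apply: Rdiv_lt_0_compat; [apply: Rdiv_lt_0_compat|]; lra.
have [z [clz xz]] := clx _ d0.
have [y [Sy zy]] := clz _ d0.
exists y; split => //; apply: rdist_small => // i.
have := rdist_coord x z i; have := rdist_coord z y i; rewrite /rball in xz zy.
have := Rabs_triang (x i - z i) (z i - y i).
have -> : x i - z i + (z i - y i) = x i - y i by ring.
lra.
Qed.

Lemma rclosure_bounded_coords N (S : pt N -> Prop) :
  is_bounded S -> exists M, forall x, rclosure S x -> forall i, Rabs (x i) <= M.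
Proof.
move=> [M HM]; exists (M + 1) => x clx i.
have [y [Sy xy]] := clx 1 Rlt_0_1; rewrite /rball in xy.
have := rdist_coord x y i; have := rdist_coord (fun _ => 0) y i; have := HM y Sy.
have := Rabs_triang (x i - y i) (y i).
rewrite Rminus_0_l Rabs_Ropp (_ : x i - y i + y i = x i); [lra | ring].
Qed.

Definition cont_within N (K : pt N -> Prop) (f : pt N -> R) (x : pt N) : Prop :=
  forall e, 0 < e -> exists d, 0 < d /\
    forall y, K y -> rdist x y < d -> Rabs (f x - f y) < e.

Lemma holder_cont_within N (S : pt N -> Prop) (alpha : R) (f : pt N -> R) :
  0 < alpha -> holder_on S alpha f -> forall x, S x -> cont_within S f x.
Proof.
move=> ha [C HC] x Sx e e0.
have C1 : 0 < Rabs C + 1 by have := Rabs_pos C; lra.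
have eC : 0 < e / (Rabs C + 1) by apply: Rdiv_lt_0_compat.
exists (Rpower (e / (Rabs C + 1)) (/ alpha)); split; first exact: exp_pos.
move=> y Sy xy.
case: (Req_dec (rdist x y) 0) => [/rdist_eq0 <-|dxy].
  by rewrite Rminus_diag Rabs_R0.
have dpos : 0 < rdist x y.
  have := sqrt_pos (\big[Rplus/0]_(i < N) ((x i - y i) * (x i - y i))).
  by rewrite /rdist in dxy *; lra.
set p := Rpower (rdist x y) alpha.
have p0 : 0 < p by exact: exp_pos.
have small : p < e / (Rabs C + 1).
  have := Rlt_Rpower_l _ _ alpha ha (conj dpos xy).
  by rewrite Rpower_mult Rinv_l ?Rpower_1 //; lra.
have Cp : C * p <= Rabs C * p by apply: Rmult_le_compat_r; [lra | exact: RRle_abs].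
have ee : e = (Rabs C + 1) * (e / (Rabs C + 1)) by field; lra.
have := HC x y Sx Sy; rewrite -/p; nra.
Qed.

Lemma cont_within_addc N (K : pt N -> Prop) (f : pt N -> R) (e : R) (x : pt N) :
  cont_within K f x -> cont_within K (fun y => f y + e) x.
Proof.
move=> fc r r0; have [d [d0 Hd]] := fc r r0; exists d; split => // y Ky xy.
by rewrite (_ : f x + e - (f y + e) = f x - f y); [exact: Hd | ring].
Qed.

Lemma cont_within_minus N (K : pt N -> Prop) (f g : pt N -> R) (x : pt N) :
  cont_within K f x -> cont_within K g x -> cont_within K (fun y => f y - g y) x.
Proof.
move=> fc gc e e0.
have [d1 [d10 H1]] := fc (e / 2) ltac:(lra).
have [d2 [d20 H2]] := gc (e / 2) ltac:(lra).
exists (Rmin d1 d2); split; first exact: Rmin_pos.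
move=> y Ky xy.
have := H1 y Ky (Rlt_le_trans _ _ _ xy (Rmin_l _ _)).
have := H2 y Ky (Rlt_le_trans _ _ _ xy (Rmin_r _ _)).
have := Rabs_triang (f x - f y) (- (g x - g y)); rewrite Rabs_Ropp.
rewrite (_ : f x - g x - (f y - g y) = f x - f y + - (g x - g y)); [lra | ring].
Qed.

Lemma cont_within_ln N (K : pt N -> Prop) (g : pt N -> R) (x : pt N) :
  K x -> (forall y, K y -> 0 < g y) -> cont_within K g x ->
  cont_within K (fun y => ln (g y)) x.
Proof.
move=> Kx gpos gc e e0.
have [d1 [d10 Hln]] := ln_continue (g x) (gpos x Kx) e e0.
have [d [d0 Hd]] := gc d1 d10.
exists d; split => // y Ky xy.
case: (Req_dec (g x) (g y)) => [->|gxy]; first by rewrite Rminus_diag Rabs_R0.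
rewrite Rabs_minus_sym; apply: (Hln (g y)); split; first by split; [exact: gpos|].
by rewrite /dist /= /Rdist Rabs_minus_sym; exact: Hd.
Qed.

Lemma mx_ballP (n : nat) (v w : 'rV[R]_n) (e : R) :
  ball v e w <-> (0 < e /\ forall i j, `|v i j - w i j| < e)%R.
Proof. by []. Qed.

(* Points of R^N are
   identified with row vectors so that the compactness theory applies. *)
Lemma extreme_value N (K : pt N -> Prop) (f : pt N -> R) :
  (exists x, K x) ->
  (exists M, forall x, K x -> forall i, Rabs (x i) <= M) ->
  (forall x, rclosure K x -> K x) ->
  (forall x, K x -> cont_within K f x) ->
  exists x0, K x0 /\ forall x, K x -> f x <= f x0.
Proof.
move=> [x Kx] [M HM] Kclosed Kcont.
have hN := pos_INR N.
pose vec (v : 'rV[R]_N) : pt N := fun i => v ord0 i.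
pose A := [set v : 'rV[R]_N | K (vec v)]%classic.
have vec_row (y : pt N) : vec (\row_k y k)%R = y.
  by apply: functional_extensionality => i; rewrite /vec mxE.
have ball_coords (v w : 'rV[R]_N) (e : R) :
    ball v e w -> forall i, Rabs (vec v i - vec w i) < e.
  by move=> /mx_ballP [_ vw] i; apply/RltP; rewrite RabsE; exact: vw.
have shrink (e : R) : 0 < e -> 0 < e / (INR N + 1).
  by move=> e0; apply: Rdiv_lt_0_compat; lra.
have [c Ac cmax] : exists2 c, c \in A & forall t, t \in A -> (f (vec t) <= f (vec c))%R.
  apply: EVT_max_rV.
  - by exists (\row_k x k)%R; rewrite /A /= vec_row.
  - apply: bounded_closed_compact.
    + exists (Num.max M 0); split; first by rewrite num_real.
      move=> y My v Av.
      have : ball (0 : 'rV[R]_N)%R y v.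
        apply/mx_ballP; split.
          by apply: le_lt_trans My; rewrite le_max lexx orbT.
        move=> i j; rewrite (ord1 i) mxE sub0r normrN.
        apply: le_lt_trans My; rewrite le_max; apply/orP; left.
        by rewrite -RabsE; apply/RleP; exact: HM.
      by rewrite mx_norm_ball /ball_ /= sub0r normrN => /ltW.
    + move=> v clv; apply: Kclosed => r r0.
      have [w [Aw vw]] := clv _ (nbhsx_ballx v _ (introT RltP (shrink r r0))).
      by exists (vec w); split => //; apply: rdist_small => //; exact: ball_coords.
  - apply/subspace_continuousP => v Av.
    apply/cvgrPdist_lt => e /RltP e0.
    have [d [d0 Hd]] := Kcont _ Av e e0.
    apply/nbhs_ballP; exists (d / (INR N + 1)); first exact/RltP/shrink.
    move=> t vt At; rewrite -RabsE; apply/RltP; apply: Hd => //.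
    by apply: rdist_small => //; exact: ball_coords.
exists (vec c); split; first by move: Ac; rewrite inE.
move=> y Ky; apply/RleP; have := cmax (\row_k y k)%R; rewrite vec_row; apply.
by rewrite inE /A /= vec_row.
Qed.

Lemma line_derivative N (f : pt N -> R) (Df : pt N -> R) (S : pt N -> Prop)
    (x : pt N) (i : 'I_N) (r : R) :
  (forall y, S y -> partial_at f i y (Df y)) ->
  (forall t, Rabs t < r -> S (Defs.shift x i t)) ->
  forall t, Rabs t < r ->
    derivable_pt_lim (fun s => f (Defs.shift x i s)) t (Df (Defs.shift x i t)).
Proof.
move=> fD line t ht e e0.
have [d Hd] := fD _ (line t ht) e e0; exists d => h h0 hd.
by have := Hd h h0 hd; rewrite !shift_shift Rplus_0_l Rplus_0_r.
Qed.

(* Second-order necessary condition for an interior maximum in one variable: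
   if H' = G near 0, G'(0) = L and H has a maximum at 0, then G(0) = 0 and
   L <= 0.  If L > 0, then G > 0 on (0, t] for small t, and the mean value
   theorem gives H t > H 0. *)
Lemma interior_max_second_order (H G : R -> R) (r L : R) : 0 < r ->
  (forall t, Rabs t < r -> derivable_pt_lim H t (G t)) ->
  derivable_pt_lim G 0 L ->
  (forall t, Rabs t < r -> H t <= H 0) -> G 0 = 0 /\ L <= 0.
Proof.
move=> r0 HG GL Hmax.
have r0' : Rabs 0 < r by rewrite Rabs_R0.
have G0 : G 0 = 0.
  apply: (@deriv_maximum H (- r) r 0 (exist _ (G 0) (HG 0 r0'))); try lra.
  by move=> y y1 y2; apply: Hmax; apply: Rabs_def1; lra.
split => //; apply: Rnot_lt_le => L0.
have [d Hd] := GL (L / 2) ltac:(lra).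
have dpos := cond_pos d.
set t := Rmin (d / 2) (r / 2).
have t0 : 0 < t by apply: Rmin_pos; lra.
have td : t < d by have := Rmin_l (d / 2) (r / 2); rewrite -/t; lra.
have tr : t < r by have := Rmin_r (d / 2) (r / 2); rewrite -/t; lra.
have [c [Hc [c0 ct]]] :=
  MVT_cor2 H G 0 t t0 (fun c hc => HG c ltac:(rewrite Rabs_right; lra)).
have := Hd c ltac:(lra) ltac:(rewrite Rabs_right; lra).
rewrite Rplus_0_l G0 Rminus_0_r => /Rabs_def2 [_ slope].
have Gc : 0 < G c.
  rewrite (_ : G c = (G c / c) * c); last by field; lra.
  apply: Rmult_lt_0_compat; lra.
have := Hmax t ltac:(rewrite Rabs_right; lra).
have : 0 < G c * (t - 0) by apply: Rmult_lt_0_compat; lra.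
lra.
Qed.

Lemma derivable_pt_lim_addc (f : R -> R) (e t l : R) :
  derivable_pt_lim f t l -> derivable_pt_lim (fun s => f s + e) t l.
Proof.
move=> fl; have := derivable_pt_lim_plus f (fun _ => e) t l 0 fl (derivable_pt_lim_const e t).
by rewrite Rplus_0_r.
Qed.

(* If ln g1 - ln g2 has a maximum at 0, then the logarithmic
   derivatives agree, p1/g1 = p2/g2 at 0, and D1/g1 <= D2/g2 at 0: the
   second derivative (D g - p^2)/g^2 of ln g compares, and the p^2/g^2 terms
   cancel. *)
Lemma log_difference_max (g1 g2 p1 p2 : R -> R) (r D1 D2 : R) : 0 < r ->
  (forall t, Rabs t < r -> 0 < g1 t) -> (forall t, Rabs t < r -> 0 < g2 t) ->
  (forall t, Rabs t < r -> derivable_pt_lim g1 t (p1 t)) ->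
  (forall t, Rabs t < r -> derivable_pt_lim g2 t (p2 t)) ->
  derivable_pt_lim p1 0 D1 -> derivable_pt_lim p2 0 D2 ->
  (forall t, Rabs t < r -> ln (g1 t) - ln (g2 t) <= ln (g1 0) - ln (g2 0)) ->
  p1 0 / g1 0 = p2 0 / g2 0 /\ D1 / g1 0 <= D2 / g2 0.
Proof.
move=> r0 g1pos g2pos dg1 dg2 dp1 dp2 lmax.
have r0' : Rabs 0 < r by rewrite Rabs_R0.
have dln (g p : R -> R) t : 0 < g t -> derivable_pt_lim g t (p t) ->
    derivable_pt_lim (fun s => ln (g s)) t (p t / g t).
  move=> gt dg; rewrite /Rdiv Rmult_comm.
  exact: (derivable_pt_lim_comp g ln t _ _ dg (derivable_pt_lim_ln _ gt)).
have dquot (g p : R -> R) D : 0 < g 0 -> derivable_pt_lim g 0 (p 0) ->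
    derivable_pt_lim p 0 D ->
    derivable_pt_lim (fun s => p s / g s) 0 ((D * g 0 - p 0 * p 0) / Rsqr (g 0)).
  move=> g0 dg dp.
  exact: (derivable_pt_lim_div p g 0 _ _ dp dg (Rgt_not_eq _ _ g0)).
have [q0 second] := interior_max_second_order r0
  (fun t ht => derivable_pt_lim_minus _ _ t _ _
     (dln g1 p1 t (g1pos t ht) (dg1 t ht)) (dln g2 p2 t (g2pos t ht) (dg2 t ht)))
  (derivable_pt_lim_minus _ _ 0 _ _
     (dquot g1 p1 D1 (g1pos 0 r0') (dg1 0 r0') dp1)
     (dquot g2 p2 D2 (g2pos 0 r0') (dg2 0 r0') dp2))
  lmax.
have U1 := g1pos 0 r0'; have U2 := g2pos 0 r0'.
have ratio : p1 0 / g1 0 = p2 0 / g2 0 by rewrite /minus_fct in q0; lra.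
split => //.
have expand (g p : R -> R) D : 0 < g 0 ->
    (D * g 0 - p 0 * p 0) / Rsqr (g 0) = D / g 0 - (p 0 / g 0) * (p 0 / g 0).
  by move=> g0; rewrite /Rsqr; field; lra.
by rewrite (expand g1) ?(expand g2) // ratio in second; lra.
Qed.

(* The equation -L + c G / U = a, divided by U > 0, reads
   L / U = c G / U^2 - a / U.  So if L1/U1 <= L2/U2 and G1/U1^2 = G2/U2^2,
   then a/U2 <= a/U1, i.e. U1 <= U2 since a > 0. *)
Lemma divided_equation_compare (L1 L2 G1 G2 U1 U2 a c : R) :
  0 < U1 -> 0 < U2 -> 0 < a ->
  L1 / U1 <= L2 / U2 -> G1 / (U1 * U1) = G2 / (U2 * U2) ->
  - L1 + c * / U1 * G1 = a -> - L2 + c * / U2 * G2 = a -> U1 <= U2.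
Proof.
move=> U1pos U2pos apos Lle Geq eq1 eq2.
have div1 : L1 / U1 = c * (G1 / (U1 * U1)) - a / U1.
  by rewrite (_ : L1 = c * / U1 * G1 - a); [field; lra | lra].
have div2 : L2 / U2 = c * (G2 / (U2 * U2)) - a / U2.
  by rewrite (_ : L2 = c * / U2 * G2 - a); [field; lra | lra].
rewrite div1 div2 Geq in Lle.
apply: Rnot_lt_le => U21.
have : / U1 < / U2 by apply: Rinv_lt_contravar; nra.
rewrite /Rdiv in Lle; nra.
Qed.

Definition logdiff N (eps : R) (u1 u2 : pt N -> R) (x : pt N) : R :=
  ln (u1 x + eps) - ln (u2 x + eps).

Section InteriorMaximum.
Variables (N : nat) (Om : pt N -> Prop) (eps : R) (u1 u2 : pt N -> R).
Variables (Du1 Du2 : 'I_N -> pt N -> R) (D2u1 D2u2 : 'I_N -> 'I_N -> pt N -> R).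
Hypothesis Du1P : forall i x, Om x -> partial_at u1 i x (Du1 i x).
Hypothesis Du2P : forall i x, Om x -> partial_at u2 i x (Du2 i x).
Hypothesis D2u1P : forall i j x, Om x -> partial_at (Du1 j) i x (D2u1 i j x).
Hypothesis D2u2P : forall i j x, Om x -> partial_at (Du2 j) i x (D2u2 i j x).
Hypothesis U1pos : forall x, Om x -> 0 < u1 x + eps.
Hypothesis U2pos : forall x, Om x -> 0 < u2 x + eps.
Variables (x0 : pt N) (r : R).
Hypothesis r_pos : 0 < r.
Hypothesis ball_in : forall y, rball x0 r y -> Om y.
Hypothesis logdiff_max : forall y, Om y -> logdiff eps u1 u2 y <= logdiff eps u1 u2 x0.

Lemma coordinate_max_conditions (i : 'I_N) :
  Du1 i x0 / (u1 x0 + eps) = Du2 i x0 / (u2 x0 + eps) /\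
  D2u1 i i x0 / (u1 x0 + eps) <= D2u2 i i x0 / (u2 x0 + eps).
Proof.
have line t : Rabs t < r -> Om (Defs.shift x0 i t).
  by move=> ht; apply: ball_in; rewrite /rball rdist_shift.
have r0' : Rabs 0 < r by rewrite Rabs_R0.
have d1 := line_derivative (Du1P i) line.
have d2 := line_derivative (Du2P i) line.
have dd1 := line_derivative (D2u1P i i) line r0'.
have dd2 := line_derivative (D2u2P i i) line r0'.
rewrite shift0 in dd1 dd2.
have lmax : forall t, Rabs t < r ->
    logdiff eps u1 u2 (Defs.shift x0 i t) <= logdiff eps u1 u2 (Defs.shift x0 i 0).
  by move=> t ht; rewrite shift0; exact: logdiff_max (line t ht).
have := log_difference_max r_pos
  (fun t ht => U1pos (line t ht)) (fun t ht => U2pos (line t ht))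
  (fun t ht => derivable_pt_lim_addc eps (d1 t ht))
  (fun t ht => derivable_pt_lim_addc eps (d2 t ht)) dd1 dd2
  lmax.
by rewrite /= !shift0.
Qed.

Lemma laplacian_gradient_compare :
  laplacian_sum D2u1 x0 / (u1 x0 + eps) <= laplacian_sum D2u2 x0 / (u2 x0 + eps) /\
  grad_sq Du1 x0 / ((u1 x0 + eps) * (u1 x0 + eps)) =
  grad_sq Du2 x0 / ((u2 x0 + eps) * (u2 x0 + eps)).
Proof.
have Om0 : Om x0 by apply: ball_in; rewrite /rball rdist_refl.
have U1 := U1pos Om0; have U2 := U2pos Om0.
rewrite /laplacian_sum /grad_sq /Rdiv -!sum_mulr; split.
  by apply: sum_le => i; exact: (coordinate_max_conditions i).2.
apply: eq_bigr => i _.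
have [ratio _] := coordinate_max_conditions i.
have sq (p U : R) : 0 < U -> p * p * / (U * U) = (p / U) * (p / U).
  by move=> U0; field; lra.
by rewrite !sq // ratio.
Qed.

Variables (a c : pt N -> R).
Hypothesis eq1 :
  - laplacian_sum D2u1 x0 + c x0 * / (u1 x0 + eps) * grad_sq Du1 x0 = a x0.
Hypothesis eq2 :
  - laplacian_sum D2u2 x0 + c x0 * / (u2 x0 + eps) * grad_sq Du2 x0 = a x0.
Hypothesis a_pos : 0 < a x0.

Lemma interior_max_ordered : u1 x0 <= u2 x0.
Proof.
have Om0 : Om x0 by apply: ball_in; rewrite /rball rdist_refl.
have [lap grad] := laplacian_gradient_compare.
have := divided_equation_compare (U1pos Om0) (U2pos Om0) a_pos lap grad eq1 eq2.
lra.
Qed.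

End InteriorMaximum.

Lemma solution_shift_pos N (Om : pt N -> Prop) (alpha eps : R) (a c u : pt N -> R) :
  0 < eps -> is_solution Om alpha eps a c u ->
  forall x, rclosure Om x -> 0 < u x + eps.
Proof.
move=> eps0 [_ [Du [D2u [_ [_ [upos ubd]]]]]] x clx.
case: (pselect (Om x)) => [/upos | notOm]; first lra.
by rewrite ubd; [lra | split].
Qed.

Section Comparison.
Variables (N : nat) (Om : pt N -> Prop) (alpha eps : R) (a c u1 u2 : pt N -> R).
Hypothesis Om_open : is_open Om.
Hypothesis Om_nonempty : exists x, Om x.
Hypothesis Om_bounded : is_bounded Om.
Hypothesis alpha_pos : 0 < alpha.
Hypothesis eps_pos : 0 < eps.
Hypothesis a_pos : forall x, Om x -> 0 < a x.
Hypothesis sol1 : is_solution Om alpha eps a c u1.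
Hypothesis sol2 : is_solution Om alpha eps a c u2.

Lemma logdiff_attains_max : exists x0, rclosure Om x0 /\
  forall x, rclosure Om x -> logdiff eps u1 u2 x <= logdiff eps u1 u2 x0.
Proof.
have [x Omx] := Om_nonempty.
have U1pos := solution_shift_pos eps_pos sol1.
have U2pos := solution_shift_pos eps_pos sol2.
have cont_shift (u : pt N -> R) : holder_on (rclosure Om) alpha u ->
    forall y, rclosure Om y -> cont_within (rclosure Om) (fun z => u z + eps) y.
  by move=> uh y cly; apply: cont_within_addc; exact: holder_cont_within uh y cly.
apply: extreme_value.
- by exists x; exact: subset_rclosure.
- exact: rclosure_bounded_coords.
- by move=> y; exact: rclosure_closed.
- move=> y cly; apply: cont_within_minus.
    by apply: cont_within_ln => //; exact: cont_shift sol1.1 y cly.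
  by apply: cont_within_ln => //; exact: cont_shift sol2.1 y cly.
Qed.

(* The maximum is nonpositive: a positive maximum vanishes on the boundary,
   so it is interior, where the equation forces u1 <= u2, i.e. logdiff <= 0. *)
Lemma logdiff_max_nonpos (x0 : pt N) : rclosure Om x0 ->
  (forall x, rclosure Om x -> logdiff eps u1 u2 x <= logdiff eps u1 u2 x0) ->
  logdiff eps u1 u2 x0 <= 0.
Proof.
move=> clx0 lmax; apply: Rnot_lt_le => pos.
have U1pos := solution_shift_pos eps_pos sol1.
have U2pos := solution_shift_pos eps_pos sol2.
have U21 : u2 x0 + eps < u1 x0 + eps.
  by apply: ln_lt_inv; [exact: U2pos | exact: U1pos | rewrite /logdiff in pos; lra].
have [Om0 | notOm0] := pselect (Om x0); last first.
  have [_ [? [? [_ [_ [_ bd1]]]]]] := sol1; have [_ [? [? [_ [_ [_ bd2]]]]]] := sol2.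
  by move: U21; rewrite bd1 ?bd2 //; lra.
have [r [r0 ball_in]] := Om_open Om0.
have [_ [Du1 [D2u1 [[Du1P [D2u1P _]] [eq1 _]]]]] := sol1.
have [_ [Du2 [D2u2 [[Du2P [D2u2P _]] [eq2 _]]]]] := sol2.
have := interior_max_ordered Du1P Du2P D2u1P D2u2P
  (fun x Omx => U1pos x (subset_rclosure Omx)) (fun x Omx => U2pos x (subset_rclosure Omx))
  r0 ball_in (fun y Omy => lmax y (subset_rclosure Omy))
  (eq1 x0 Om0) (eq2 x0 Om0) (a_pos Om0).
lra.
Qed.

Lemma solution_comparison : forall x, rclosure Om x -> u1 x <= u2 x.
Proof.
have [x0 [clx0 lmax]] := logdiff_attains_max.
have nonpos := logdiff_max_nonpos clx0 lmax.
move=> x clx; apply: Rnot_lt_le => u21.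
have := ln_increasing (u2 x + eps) (u1 x + eps)
  (solution_shift_pos eps_pos sol2 clx) ltac:(lra).
by move: nonpos (lmax x clx); rewrite /logdiff; lra.
Qed.

End Comparison.

Theorem mainTheorem4 (N : nat) (Om : pt N -> Prop) (alpha eps : R) (a c : pt N -> R)
  (hOm : is_domain Om) (hbd : is_bounded Om) (hreg : C2alpha_boundary Om alpha)
  (halpha : 0 < alpha < 1)
  (ha : holder_on (rclosure Om) alpha a) (hc : holder_on (rclosure Om) alpha c)
  (hapos : forall x, rclosure Om x -> 0 < a x) (hcpos : forall x, rclosure Om x -> 0 < c x)
  (heps : 0 < eps < 1)
  (u1 u2 : pt N -> R)
  (h1 : is_solution Om alpha eps a c u1) (h2 : is_solution Om alpha eps a c u2) :
  forall x, rclosure Om x -> u1 x = u2 x.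
Proof.
have [Om_open [Om_nonempty _]] := hOm.
have a_pos : forall x, Om x -> 0 < a x by move=> x /subset_rclosure; exact: hapos.
move=> x clx; apply: Rle_antisym.
- exact: (solution_comparison Om_open Om_nonempty hbd (proj1 halpha) (proj1 heps) a_pos h1 h2).
- exact: (solution_comparison Om_open Om_nonempty hbd (proj1 halpha) (proj1 heps) a_pos h2 h1).
Qed.
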